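(* Let $r\in\mathbb{Z}_{\ge0}$. Every character $\chi$ of $T$ of true depth $r$ is of the form $\chi=(\phi\circ\mathrm{det})\otimes\chi'$, where $\phi$ is a character of $E^1$ and $\chi'$ is a character of $T$ of minimal depth $r$.
   Context: Let $F$ be a non-archimedean local field with odd residual characteristic, ring of integers $\mathcal{O}_F$, maximal ideal $\mathfrak{p}_F$. Fix a non-square $\epsilon\in\mathcal{O}_F^\times$, $E=F[\sqrt\epsilon]$ with ring of integers $\mathcal{O}_E$, maximal ideal $\mathfrak{p}_E$; $\overline{x}$ is Galois conjugation; $E^1=\{x\in E^\times: x\overline x=1\}$. $G=\{g\in\mathrm{GL}_2(E):\overline{g}^{\top}\mathrm{w}g=\mathrm{w}\}$, $\mathrm{w}=\begin{pmatrix}0&1\\1&0\end{pmatrix}$; $\det(G)\subseteq E^1$. $T=\{t(a)=\mathrm{diag}(a,\overline a^{-1}):a\in E^\times\}$, $T_0=\{t(a):a\in\mathcal{O}_E^\times\}$, $T_n=\{t(a):a\in1+\mathfrak{p}_E^n\}$ ($n\ge1$); $S=\{\mathrm{diag}(a,a^{-1}):a\in F^\times\}$, $S_0$ ($a\in\mathcal{O}_F^\times$), $S_n$ ($a\in1+\mathfrak{p}_F^n$). A character $\chi$ of $T$ has depth $r\in\mathbb{Z}_{\ge0}$ if $\chi|_{T_r}\neq\mathbbm{1}$ and $\chi|_{T_{r+1}}=\mathbbm{1}$; a character trivial on $T_0$ is also said to have depth $0$. The true depth of $\chi$ is the depth of $\chi|_S$ (defined analogously with $S_n$). $\chi$ has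 minimal depth $r$ if its depth and true depth both equal $r$. *)

From HB Require Import structures.
From mathcomp Require Import all_boot all_order all_algebra.
From mathcomp Require Import reals.
From mathcomp.real_closed Require Import complex.
Set Implicit Arguments. Unset Strict Implicit. Unset Printing Implicit Defensive.
Import Order.TTheory GRing.Theory Num.Theory.
Local Open Scope ring_scope.

(* Setup.  E is a field, [sigma] a ring automorphism of E of order 2 (Galois *)
(* conjugation), F := the fixed field of sigma, and v : E -> int a discrete  *)
(* valuation on E (the value v 0 is junk and never used).                    *)

Section Setup.
Variables (E : fieldType) (sigma : {rmorphism E -> E}) (v : E -> int).

Definition inF (x : E) : Prop := sigma x = x.

(* x \in p_E^n  (n : int; n = 0 gives O_E) *)
Definition pid (n : int) (x : E) : bool := (x == 0) || (n <= v x).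

(* F is a non-archimedean local field with odd residual characteristic, E is
   the unramified quadratic extension F[sqrt eps] with eps in O_F^x a
   non-square, sigma is the Galois conjugation, and v is the normalized
   discrete valuation of E (whose restriction to F is the normalized
   valuation of F, since E/F is unramified). *)
Definition unram_quad_local_setup : Prop :=
  (forall x, sigma (sigma x) = x) /\
  (
      (forall x y, x != 0 -> y != 0 -> v (x * y) = v x + v y) /\
      (forall x y, x != 0 -> y != 0 -> x + y != 0 ->
         Order.min (v x) (v y) <= v (x + y)) /\
      (* discrete and normalized: F has a uniformizer of valuation 1 *)
      (exists varpi, inF varpi /\ varpi != 0 /\ v varpi = 1) /\
      (forall u : nat -> E, (forall i, inF (u i)) ->
         (forall n : nat, exists N : nat, forall i j, (N <= i)%N -> (N <= j)%N ->
             pid n%:Z (u i - u j)) ->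
         exists l, inF l /\ forall n : nat, exists N : nat, forall i, (N <= i)%N ->
             pid n%:Z (u i - l)) /\
      (* the residue field O_F / p_F is finite *)
      (exists s : seq E, (forall y, y \in s -> inF y /\ pid 0 y) /\
         forall x, inF x -> pid 0 x -> exists2 y, y \in s & pid 1 (x - y)) /\
      (* odd residual characteristic: 2 is a unit of O_F *)
      ((2%:R : E) != 0 /\ v 2%:R = 0) /\
      (exists eps sq : E,
         inF eps /\ eps != 0 /\ v eps = 0 /\
         ~ (exists c, inF c /\ c ^+ 2 = eps) /\
         sq ^+ 2 = eps /\ sigma sq = - sq /\
         (forall x, exists a b, inF a /\ inF b /\ x = a + b * sq))).

Definition tmat (a : E) : 'M[E]_2 :=
  \matrix_(i < 2, j < 2) (if i == j then (if i == 0 then a else (sigma a)^-1) else 0).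

(* membership of t(a) in T_n : n = 0 gives T_0 (a in O_E^x), n >= 1 gives
   a in 1 + p_E^n *)
Definition inTn (n : nat) (a : E) : Prop :=
  if n is 0 then a != 0 /\ v a = 0 else a != 0 /\ pid n%:Z (a - 1).

(* membership of diag(a, a^-1) in S_n (a in F); since E/F is unramified,
   F cap (1 + p_E^n) = 1 + p_F^n and F cap O_E^x = O_F^x *)
Definition inSn (n : nat) (a : E) : Prop := inF a /\ inTn n a.

Definition inE1 (x : E) : Prop := x * sigma x = 1.

Variable R : realType.

(* a (smooth) character of T, seen as a function on 2x2 matrices whose values
   on T matter: nonvanishing, multiplicative on T, trivial on some T_n *)
Definition is_char_T (chi : 'M[E]_2 -> R[i]) : Prop :=
  [/\ (forall a, a != 0 -> chi (tmat a) != 0),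
      (forall a b, a != 0 -> b != 0 -> chi (tmat a *m tmat b) = chi (tmat a) * chi (tmat b)) &
      (exists n : nat, forall a, inTn n.+1 a -> chi (tmat a) = 1)].

Definition is_char_E1 (phi : E -> R[i]) : Prop :=
  [/\ (forall x, inE1 x -> phi x != 0),
      (forall x y, inE1 x -> inE1 y -> phi (x * y) = phi x * phi y) &
      (exists n : nat, forall x, inE1 x -> pid n.+1%:Z (x - 1) -> phi x = 1)].

Definition trivT (chi : 'M[E]_2 -> R[i]) (n : nat) : Prop :=
  forall a, inTn n a -> chi (tmat a) = 1.

Definition trivS (chi : 'M[E]_2 -> R[i]) (n : nat) : Prop :=
  forall a, inSn n a -> chi (tmat a) = 1.

Definition has_depth (chi : 'M[E]_2 -> R[i]) (r : nat) : Prop :=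
  (~ trivT chi r /\ trivT chi r.+1) \/ (r = 0%N /\ trivT chi 0).

Definition has_true_depth (chi : 'M[E]_2 -> R[i]) (r : nat) : Prop :=
  (~ trivS chi r /\ trivS chi r.+1) \/ (r = 0%N /\ trivS chi 0).

Definition has_min_depth (chi : 'M[E]_2 -> R[i]) (r : nat) : Prop :=
  has_depth chi r /\ has_true_depth chi r.

End Setup.

(* On F^x, chi is trivial on F^x meet (1 + p_E^(r+1)), so f u |-> chi f is a
   well-defined character of the subgroup F^x (1 + p_E^(r+1)) of E^x.  As C^x
   is divisible, Zorn's lemma extends it to a character psi of E^x that is
   trivial on 1 + p_E^(r+1).  Then chi / psi is trivial on F^x, hence factors
   through a |-> a / sigma a = det t(a), which maps E^x onto E^1 by Hilbert 90;
   this gives phi.  Finally chi' = psi o t^-1 is trivial on T_(r+1) and agrees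
   with chi on S, so its depth and true depth are both r. *)

From HB Require Import structures.
From mathcomp Require Import all_boot all_order all_algebra.
From mathcomp Require Import reals.
From mathcomp.real_closed Require Import complex.
From mathcomp Require Import boolp classical_sets.
From mathcomp Require Import zify ring.
Set Implicit Arguments. Unset Strict Implicit. Unset Printing Implicit Defensive.
Import Order.TTheory GRing.Theory Num.Theory.
Local Open Scope ring_scope.

Section HomGraph.
Variables (E : fieldType) (C : numClosedFieldType).
Local Open Scope classical_set_scope.

Definition hom_graph (X : set (E * C)) : Prop :=
  [/\ (forall x c c', X (x, c) -> X (x, c') -> c = c'),
      (forall x c, X (x, c) -> x != 0 /\ c != 0),
      (forall x y a b, X (x, a) -> X (y, b) -> X (x * y, a * b)) &
      (forall x a, X (x, a) -> X (x^-1, a^-1))].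

Lemma hom_graph_expz (A : set (E * C)) x a : hom_graph A -> A (1, 1) ->
  A (x, a) -> forall k : int, A (x ^ k, a ^ k).
Proof.
case=> _ _ AM AV A1 Axa.
have AXn (n : nat) : A (x ^+ n, a ^+ n).
  by elim: n => [|n IHn]; rewrite ?expr0 // !exprS; apply: AM.
by case=> n; rewrite ?NegzE -?exprnN; [apply: AXn | apply: AV].
Qed.

Lemma exists_root_on_cyclic (A : set (E * C)) g : hom_graph A -> A (1, 1) ->
  g != 0 ->
  exists2 z : C, z != 0 & forall m : int, (exists c, A (g ^ m, c)) -> A (g ^ m, z ^ m).
Proof.
move=> homA A1 g0; have [Afun Anz AM AV] := homA.
have [ex|nex] :=
    pselect (exists n : nat, (0 < n)%N && `[< exists c, A (g ^+ n, c) >]); last first.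
  exists 1 => [|[[|k]|k] [c Ac]]; rewrite ?oner_neq0 ?expr0z //.
    by exfalso; apply: nex; exists k.+1; apply/asboolP; exists c.
  exfalso; apply: nex; exists k.+1; apply/asboolP; exists c^-1.
  by move: (AV _ _ Ac); rewrite NegzE -exprnN invrK.
(* Taking n minimal, every m with g^m in the domain is a multiple of n. *)
case: (ex_minnP ex) => n /andP[n0 /asboolP[w Aw]] nmin.
have [_ w0] := Anz _ _ Aw.
have rootK := rootCK n0 w.
exists (n.-root w) => [|m [c Ac]].
  by apply: contraNneq w0 => z0; rewrite -rootK z0 expr0n gtn_eqF.
have Amult (q : int) : A (g ^ (q * n), n.-root w ^ (q * n)).
  rewrite mulrC -!exprz_exp -!exprnP rootK; exact: hom_graph_expz.
have n0' : n%:Z != 0 by rewrite eqz_nat -lt0n.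
have [k mod_m] : exists k : nat, (m %% n)%Z = k.
  by exists `|(m %% n)%Z|%N; rewrite gez0_abs // modz_ge0.
suff k0 : k = 0%N by rewrite (divz_eq m n) mod_m k0 addr0; apply: Amult.
apply/eqP; rewrite -leqn0 leqNgt; apply/negP => k_gt0.
have : (n <= k)%N.
  apply: nmin; rewrite k_gt0 /=; apply/asboolP.
  exists (c * (n.-root w ^ ((m %/ n)%Z * n))^-1).
  have := AM _ _ _ _ Ac (AV _ _ (Amult (m %/ n)%Z)).
  rewrite {1}(divz_eq m n) mod_m expfzDr // mulrAC mulfV ?expfz_neq0 // mul1r.
  by rewrite -exprnP.
by rewrite leqNgt -ltz_nat -mod_m ltz_pmod // ltz_nat lt0n -eqz_nat.
Qed.

(* The extension sends g^m a to z^m c for every (a, c) in A. *)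
Lemma hom_graph_adjoin (A : set (E * C)) g : hom_graph A -> A (1, 1) -> g != 0 ->
  exists A' : set (E * C), [/\ hom_graph A', A `<=` A' & exists c, A' (g, c)].
Proof.
move=> homA A1 g0; have [Afun Anz AM AV] := homA.
have [z z0 Az] := exists_root_on_cyclic homA A1 g0.
exists (fun p => exists (m : int) a, A (p.1 * g ^ (- m), a) /\ p.2 = a * z ^ m).
split; last 2 first.
- move=> [x c] Ac; exists 0, c; split; first by rewrite /= oppr0 expr0z mulr1.
  by rewrite expr0z mulr1.
- by exists z, 1, 1; rewrite /= exprN1 mulfV // mul1r expr1z.
split.
- move=> x c c' /= [m [a [Aa ->]]] [k [b [Ab ->]]].
  have [xm0 a0] := Anz _ _ Aa; have [_ b0] := Anz _ _ Ab.
  have x0 : x != 0 by apply: contraNneq xm0 => ->; rewrite mul0r.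
  have quot : (x * g ^ (- k))^-1 * (x * g ^ (- m)) = g ^ (k - m).
    by rewrite invfM invr_expz opprK mulrACA mulVf // mul1r -expfzDr.
  have Aquot := AM _ _ _ _ (AV _ _ Ab) Aa; rewrite quot in Aquot.
  have := Afun _ _ _ Aquot (Az _ (ex_intro _ _ Aquot)).
  move=> /(congr1 (fun t => b * t)); rewrite mulrA mulfV // mul1r => ->.
  by rewrite -mulrA -expfzDr // addrNK.
- move=> x c /= [m [a [Aa ->]]]; have [xm0 a0] := Anz _ _ Aa.
  split; first by apply: contraNneq xm0 => ->; rewrite mul0r.
  by rewrite mulf_neq0 // expfz_neq0.
- move=> x y a b /= [m [a' [Aa ->]]] [k [b' [Ab ->]]].
  exists (m + k), (a' * b'); rewrite expfzDr // mulrACA; split=> //.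
  by have := AM _ _ _ _ Aa Ab; rewrite /= opprD expfzDr // mulrACA.
- move=> x a /= [m [a' [Aa ->]]].
  exists (- m), a'^-1; rewrite invfM invr_expz; split=> //.
  by have := AV _ _ Aa; rewrite /= invfM invr_expz.
Qed.

Lemma hom_graph_bigcup (F : set (set (E * C))) :
  (forall X, F X -> hom_graph X) -> total_on F subset ->
  hom_graph (\bigcup_(X in F) X).
Proof.
move=> Fhom Ftot.
have common p q : (\bigcup_(X in F) X) p -> (\bigcup_(X in F) X) q ->
    exists X, [/\ F X, X p & X q].
  move=> [X FX Xp] [Y FY Yq].
  by case: (Ftot _ _ FX FY) => [/(_ p Xp)|/(_ q Yq)]; [exists Y | exists X].
split.
- move=> x c c' Uc Uc'; have [X [/Fhom[Xfun _ _ _] Xc Xc']] := common _ _ Uc Uc'.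
  exact: Xfun Xc Xc'.
- by move=> x c [X /Fhom[_ Xnz _ _] /Xnz].
- move=> x y a b Ua Ub; have [X [FX Xa Xb]] := common _ _ Ua Ub.
  by have [_ _ XM _] := Fhom _ FX; exists X => //; apply: XM.
- by move=> x a [X FX Xa]; have [_ _ _ XV] := Fhom _ FX; exists X => //; apply: XV.
Qed.

Lemma hom_graph_total (B : set (E * C)) : hom_graph B -> B (1, 1) ->
  exists A : set (E * C),
    [/\ hom_graph A, B `<=` A & forall x, x != 0 -> exists c, A (x, c)].
Proof.
move=> homB B1.
(* [set0] must be admitted: it is the union of the empty chain. *)
pose P X := hom_graph X /\ (X = set0 \/ B `<=` X).
have [F FP Ftot|A [[homA [A0|BA]] Amax]] := @Zorn_bigcup _ P.
- split; first by apply: hom_graph_bigcup Ftot => X /FP[].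
  have [[X [FX BX]]|nBX] := pselect (exists X, F X /\ B `<=` X).
    by right=> p Bp; exists X => //; apply: BX.
  left; apply/seteqP; split=> // p [X FX Xp].
  have [_ [X0|BX]] := FP _ FX; first by rewrite X0 in Xp.
  by exfalso; apply: nBX; exists X.
- exfalso; apply: (Amax B); last by split=> //; right.
  by rewrite A0; split=> //; move=> /(_ (1, 1) B1).
- exists A; split=> // g g0; apply: contrapT => Ag.
  have [A' [homA' AA' [c A'g]]] := hom_graph_adjoin homA (BA _ B1) g0.
  apply: (Amax A'); last by split=> //; right; apply: subset_trans AA'.
  by split=> // A'A; apply: Ag; exists c; apply: A'A.
Qed.

Lemma exists_hom_extending_graph (B : set (E * C)) : hom_graph B -> B (1, 1) ->
  exists psi : E -> C,
    [/\ (forall x, x != 0 -> psi x != 0),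
        (forall x y, x != 0 -> y != 0 -> psi (x * y) = psi x * psi y) &
        (forall x c, B (x, c) -> psi x = c)].
Proof.
move=> homB B1; have [A [[Afun Anz AM _] BA Atot]] := hom_graph_total homB B1.
have /choice[psi Apsi] : forall x : E, exists c : C, x != 0 -> A (x, c).
  move=> x.
  by have [/eqP|/Atot[c Ac]] := boolP (x == 0); [exists 0 | exists c].
exists psi; split.
- by move=> x /Apsi /Anz[].
- move=> x y x0 y0; apply: Afun (Apsi _ (mulf_neq0 x0 y0)) _.
  exact: AM (Apsi x x0) (Apsi y y0).
- by move=> x c Bxc; have [x0 _] := Anz _ _ (BA _ Bxc); apply: Afun (Apsi x x0) (BA _ Bxc).
Qed.
End HomGraph.

Section Valuation.
Variables (E : fieldType) (v : E -> int).
Hypothesis vM : forall x y, x != 0 -> y != 0 -> v (x * y) = v x + v y.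
Hypothesis vU : forall x y, x != 0 -> y != 0 -> x + y != 0 ->
  Order.min (v x) (v y) <= v (x + y).

Lemma val1 : v 1 = 0.
Proof.
have := vM (oner_neq0 E) (oner_neq0 E); rewrite mulr1 => v11.
by apply: (addrI (v 1)); rewrite addr0 -v11.
Qed.

Lemma valV x : x != 0 -> v x^-1 = - v x.
Proof. by move=> x0; have := vM x0 (invr_neq0 x0); rewrite mulfV // val1; lia. Qed.

Lemma valN x : x != 0 -> v (- x) = v x.
Proof.
have N10 : (-1 : E) != 0 by rewrite oppr_eq0 oner_neq0.
have vN1 : v (-1) = 0 by have := vM N10 N10; rewrite mulrNN mulr1 val1; lia.
by move=> x0; rewrite -mulN1r vM // vN1 add0r.
Qed.

Lemma pidN n x : pid v n (- x) = pid v n x.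
Proof. by rewrite /pid oppr_eq0; have [->//|x0] := eqVneq x 0; rewrite valN. Qed.

Lemma pidD n x y : pid v n x -> pid v n y -> pid v n (x + y).
Proof.
rewrite /pid; have [->|x0] := eqVneq x 0; first by rewrite add0r.
have [->|y0] := eqVneq y 0; first by rewrite addr0 (negbTE x0) => ->.
have [//|xy0] := eqVneq (x + y) 0; rewrite /= => vx vy.
by apply: le_trans (vU x0 y0 xy0); rewrite le_min vx vy.
Qed.

Lemma pidM n m x y : pid v n x -> pid v m y -> pid v (n + m) (x * y).
Proof.
rewrite /pid; have [->|x0] := eqVneq x 0; first by rewrite mul0r eqxx.
have [->|y0] := eqVneq y 0; first by rewrite mulr0 eqxx.
by rewrite mulf_eq0 (negbTE x0) (negbTE y0) /= vM //; apply: lerD.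
Qed.

Lemma pid_le n m x : n <= m -> pid v m x -> pid v n x.
Proof. by rewrite /pid => nm /orP[->//|vx]; rewrite (le_trans nm vx) orbT. Qed.

Lemma val_1pid (n : int) x : 1 <= n -> x != 0 -> pid v n (x - 1) -> v x = 0.
Proof.
move=> n1 x0 x1; have x1' := pid_le n1 x1.
have pid1 : pid v 0 1 by rewrite /pid val1 lexx orbT.
have : pid v 0 x by rewrite -(subrK 1 x); apply: pidD (pid_le _ x1') pid1.
have : ~~ pid v 1 x.
  apply/negP => vx; have := pidD vx (etrans (pidN _ _) x1').
  by rewrite opprB addrC subrK /pid oner_eq0 val1.
by rewrite /pid (negbTE x0) /=; lia.
Qed.

Lemma inTn_le m n a : (m <= n)%N -> inTn v n a -> inTn v m a.
Proof.
case: m => [|m]; case: n => [|n] //= mn [a0 a1]; split=> //.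
  exact: val_1pid a1.
by apply: pid_le a1; rewrite lez_nat.
Qed.

Lemma inTnS_pid0 n x : inTn v n.+1 x -> pid v 0 x.
Proof. by move=> /(inTn_le (leq0n _))[x0 vx]; rewrite /pid vx lexx orbT. Qed.

Lemma inTnSM n x y : inTn v n.+1 x -> inTn v n.+1 y -> inTn v n.+1 (x * y).
Proof.
move=> [x0 x1] Ty; have [y0 y1] := Ty; split; first by rewrite mulf_neq0.
have -> : x * y - 1 = (x - 1) * y + (y - 1) by rewrite mulrBl mul1r addrA subrK.
by apply: pidD y1; have := pidM x1 (inTnS_pid0 Ty); rewrite addr0.
Qed.

Lemma inTnSV n x : inTn v n.+1 x -> inTn v n.+1 x^-1.
Proof.
move=> Tx; have [x0 x1] := Tx; split; first by rewrite invr_neq0.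
have -> : x^-1 - 1 = - ((x - 1) * x^-1) by rewrite mulrBl mulfV // mul1r opprB.
have vx : v x = 0 by have [] := inTn_le (leq0n _) Tx.
have xV0 : pid v 0 x^-1 by rewrite /pid valV // vx oppr0 lexx orbT.
by rewrite pidN; have := pidM x1 xV0; rewrite addr0.
Qed.

End Valuation.

Section Characters.
Variables (E : fieldType) (v : E -> int) (C : fieldType).
Hypothesis vM : forall x y, x != 0 -> y != 0 -> v (x * y) = v x + v y.
Hypothesis vU : forall x y, x != 0 -> y != 0 -> x + y != 0 ->
  Order.min (v x) (v y) <= v (x + y).

Definition is_char_units (psi : E -> C) : Prop :=
  [/\ (forall a, a != 0 -> psi a != 0),
      (forall a b, a != 0 -> b != 0 -> psi (a * b) = psi a * psi b) &
      (exists n : nat, forall a, inTn v n.+1 a -> psi a = 1)].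

Lemma char_units1 psi : is_char_units psi -> psi 1 = 1.
Proof.
case=> psi0 psiM _; have := psiM _ _ (oner_neq0 E) (oner_neq0 E).
rewrite mulr1 => psi11.
by apply: (mulfI (psi0 _ (oner_neq0 E))); rewrite -psi11 mulr1.
Qed.

Lemma char_unitsV psi a : is_char_units psi -> a != 0 -> psi a^-1 = (psi a)^-1.
Proof.
move=> psiU a0; have [psi0 psiM _] := psiU.
have := psiM _ _ a0 (invr_neq0 a0); rewrite mulfV // char_units1 // => /esym.
by move/(canRL (mulKf (psi0 _ a0))); rewrite mulr1.
Qed.

Lemma is_char_units_div psi1 psi2 : is_char_units psi1 -> is_char_units psi2 ->
  is_char_units (fun a => psi1 a / psi2 a).
Proof.
move=> [psi10 psi1M [m psi1m]] [psi20 psi2M [n psi2n]]; split.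
- by move=> a a0; rewrite mulf_neq0 ?invr_neq0 ?psi10 ?psi20.
- by move=> a b a0 b0; rewrite psi1M // psi2M // invfM mulrACA.
exists (maxn m n) => a Ta.
by rewrite psi1m ?psi2n ?divr1 //; apply: inTn_le Ta => //; rewrite ltnS ?leq_maxl ?leq_maxr.
Qed.

End Characters.

Section TorusMatrices.
Variables (E : fieldType) (sigma : {rmorphism E -> E}).

Lemma tmat_mul a b : tmat sigma a *m tmat sigma b = tmat sigma (a * b).
Proof.
apply/matrixP=> i j; rewrite !mxE !big_ord_recl big_ord0 !mxE.
case: i => [[|[|//]] ?]; case: j => [[|[|//]] ?] /=;
  by rewrite ?mulr0 ?mul0r ?addr0 ?add0r // rmorphM invfM.
Qed.

Lemma tmat00 a : tmat sigma a 0 0 = a.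
Proof. by rewrite mxE. Qed.

Lemma det_tmat a : \det (tmat sigma a) = a / sigma a.
Proof.
have -> : tmat sigma a = diag_mx (\row_(j < 2) if j == 0 then a else (sigma a)^-1).
  by apply/matrixP=> i j; rewrite !mxE; case: (i == j).
by rewrite det_diag !big_ord_recl big_ord0 !mxE mulr1.
Qed.

End TorusMatrices.

Section ExtensionFromF.
Variables (E : fieldType) (sigma : {rmorphism E -> E}) (v : E -> int).
Variables (C : numClosedFieldType) (chi : E -> C) (r : nat).
Hypothesis vM : forall x y, x != 0 -> y != 0 -> v (x * y) = v x + v y.
Hypothesis vU : forall x y, x != 0 -> y != 0 -> x + y != 0 ->
  Order.min (v x) (v y) <= v (x + y).
Hypothesis chiU : is_char_units v chi.
Hypothesis chi_FU : forall f, inF sigma f -> inTn v r.+1 f -> chi f = 1.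

Lemma inFM x y : inF sigma x -> inF sigma y -> inF sigma (x * y).
Proof. by rewrite /inF rmorphM => -> ->. Qed.

Lemma inFV x : inF sigma x -> inF sigma x^-1.
Proof. by rewrite /inF fmorphV => ->. Qed.

Lemma inF1 : inF sigma 1.
Proof. by rewrite /inF rmorph1. Qed.

(* The graph of f u |-> chi f on the subgroup F^x (1 + p_E^(r+1)). *)
Definition FU_graph (p : E * C) : Prop := exists f u,
  [/\ inF sigma f, f != 0, inTn v r.+1 u, p.1 = f * u & p.2 = chi f].

Lemma FU_graph_functional f u f' u' : inF sigma f -> f != 0 -> inTn v r.+1 u ->
  inF sigma f' -> f' != 0 -> inTn v r.+1 u' -> f * u = f' * u' -> chi f = chi f'.
Proof.
move=> Ff f0 Tu Ff' f'0 Tu' fu_eq; have [u0 _] := Tu; have [chi0 chiM _] := chiU.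
have quot : f'^-1 * f = u' / u.
  by apply: (mulfI f'0); rewrite mulVKf // mulrA -fu_eq mulfK.
have quot0 : f'^-1 * f != 0 by rewrite mulf_neq0 ?invr_neq0.
have chi_quot : chi (f'^-1 * f) = 1.
  apply: chi_FU; first exact: inFM (inFV Ff') Ff.
  by rewrite quot; apply: inTnSM Tu' (inTnSV _ _ Tu).
by rewrite -[f](mulVKf f'0) chiM ?invr_neq0 // chi_quot mulr1.
Qed.

Lemma hom_FU_graph : hom_graph FU_graph.
Proof.
have [chi0 chiM _] := chiU.
split.
- move=> x c c' [f [u [Ff f0 Tu /= -> ->]]] [f' [u' [Ff' f'0 Tu' /= fu_eq ->]]].
  exact: FU_graph_functional fu_eq.
- move=> x c [f [u [Ff f0 [u0 _] /= -> ->]]].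
  by rewrite mulf_neq0 ?chi0.
- move=> x y a b [f [u [Ff f0 Tu /= -> ->]]] [f' [u' [Ff' f'0 Tu' /= -> ->]]].
  exists (f * f'), (u * u'); split.
  + exact: inFM.
  + by rewrite mulf_neq0.
  + exact: inTnSM.
  + by rewrite /= mulrACA.
  + by rewrite /= chiM.
- move=> x a [f [u [Ff f0 Tu /= -> ->]]].
  exists f^-1, u^-1; split.
  + exact: inFV.
  + by rewrite invr_neq0.
  + exact: inTnSV.
  + by rewrite /= invfM.
  + by rewrite /= (char_unitsV chiU).
Qed.

Lemma FU_graph1 : FU_graph (1, 1).
Proof.
exists 1, 1; split; rewrite ?oner_neq0 ?mulr1 ?(char_units1 chiU) //; first exact: inF1.
by split; rewrite ?oner_neq0 ?subrr /pid ?eqxx.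
Qed.

Lemma exists_char_extending_on_F : exists psi : E -> C,
  [/\ is_char_units v psi, (forall u, inTn v r.+1 u -> psi u = 1) &
      (forall f, inF sigma f -> f != 0 -> psi f = chi f)].
Proof.
have [psi [psi0 psiM psiB]] := exists_hom_extending_graph hom_FU_graph FU_graph1.
have psiU u : inTn v r.+1 u -> psi u = 1.
  move=> Tu; rewrite (psiB u 1) //.
  by exists 1, u; rewrite mul1r (char_units1 chiU) oner_neq0; split=> //; exact: inF1.
exists psi; split=> //; first by split=> //; exists r.
move=> f Ff f0; apply: psiB; exists f, 1; rewrite mulr1; split=> //.
by split; rewrite ?oner_neq0 ?subrr /pid ?eqxx.
Qed.

End ExtensionFromF.

Section Hilbert90.
Variables (E : fieldType) (sigma : {rmorphism E -> E}) (v : E -> int) (sq : E).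
Hypothesis vM : forall x y, x != 0 -> y != 0 -> v (x * y) = v x + v y.
Hypothesis sigmaK : involutive sigma.
Hypothesis sq0 : sq != 0.
Hypothesis sigma_sq : sigma sq = - sq.
Hypothesis two0 : 2%:R != 0 :> E.
Hypothesis v2 : v 2%:R = 0.

Lemma inE1_div_conj a : a != 0 -> inE1 sigma (a / sigma a).
Proof.
move=> a0; have sa0 : sigma a != 0 by rewrite fmorph_eq0.
by rewrite /inE1 rmorphM fmorphV sigmaK; field; rewrite a0 sa0.
Qed.

(* An explicit Hilbert 90 for E/F: a preimage of x under a |-> a / sigma a. *)
Definition norm1_lift (x : E) : E := if x == -1 then sq else 1 + x.

Lemma norm1_liftP x : inE1 sigma x ->
  norm1_lift x != 0 /\ norm1_lift x / sigma (norm1_lift x) = x.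
Proof.
rewrite /inE1 /norm1_lift => xE1; have [->|xN1] := eqVneq x (-1).
  by rewrite sigma_sq invrN mulrN mulfV.
have x0 : x != 0 by apply: contra_eq_neq xE1 => ->; rewrite mul0r eq_sym oner_neq0.
have sigma_x : sigma x = x^-1 by apply: (mulfI x0); rewrite xE1 mulfV.
have x1 : 1 + x != 0 by rewrite addrC addr_eq0.
split=> //; rewrite rmorphD rmorph1 sigma_x.
by field; rewrite x0 addrC x1.
Qed.

Lemma norm1_lift_principal n x : pid v n.+1%:Z (x - 1) ->
  exists2 w, inTn v n.+1 w & norm1_lift x = 2%:R * w.
Proof.
move=> x1; have xN1 : x != -1.
  apply: contraTneq x1 => ->; rewrite /pid -opprD oppr_eq0 (negbTE two0) valN //.
  by rewrite v2.
have two1 : pid v 0 2%:R^-1 by rewrite /pid valV // v2 oppr0 lexx orbT.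
exists ((1 + x) / 2%:R); last by rewrite /norm1_lift (negbTE xN1) mulrC divfK.
split; first by rewrite mulf_neq0 ?invr_neq0 // addrC addr_eq0.
have -> : (1 + x) / 2%:R - 1 = (x - 1) * 2%:R^-1 by field.
by have := pidM vM x1 two1; rewrite addr0.
Qed.

Lemma eq_on_div_conj (C : fieldType) (rho : E -> C) a b :
  (forall a b, a != 0 -> b != 0 -> rho (a * b) = rho a * rho b) ->
  (forall f, inF sigma f -> f != 0 -> rho f = 1) ->
  a != 0 -> b != 0 -> a / sigma a = b / sigma b -> rho a = rho b.
Proof.
move=> rhoM rhoF a0 b0 ab_eq; have sigma0 c : c != 0 -> sigma c != 0 by rewrite fmorph_eq0.
have ab0 : a / b != 0 by rewrite mulf_neq0 ?invr_neq0.
have F_ab : inF sigma (a / b).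
  rewrite /inF rmorphM fmorphV; apply/eqP; rewrite eqr_div ?sigma0 //.
  by move/eqP: ab_eq; rewrite eqr_div ?sigma0 // => /eqP ->; rewrite mulrC.
by rewrite -[a](divfK b0) rhoM // rhoF // mul1r.
Qed.

Variable R : realType.

Lemma exists_E1_factor (rho : E -> R[i]) : is_char_units v rho ->
  (forall f, inF sigma f -> f != 0 -> rho f = 1) ->
  exists2 phi : E -> R[i], is_char_E1 sigma v phi &
    forall a, a != 0 -> rho a = phi (a / sigma a).
Proof.
move=> [rho0 rhoM [n rhon]] rhoF.
have rho_lift a b : a != 0 -> b != 0 -> a / sigma a = b / sigma b -> rho a = rho b.
  exact: eq_on_div_conj.
exists (fun x => rho (norm1_lift x)); last first.
  move=> a a0; have [lift0 liftE] := norm1_liftP (inE1_div_conj a0).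
  by apply: rho_lift (esym liftE).
split.
- by move=> x /norm1_liftP[lift0 _]; apply: rho0.
- move=> x y xE1 yE1; have xyE1 : inE1 sigma (x * y).
    by rewrite /inE1 rmorphM mulrACA xE1 yE1 mulr1.
  have [x0 xE] := norm1_liftP xE1; have [y0 yE] := norm1_liftP yE1.
  have [xy0 xyE] := norm1_liftP xyE1.
  rewrite -rhoM //; apply: rho_lift; rewrite ?mulf_neq0 //.
  by rewrite xyE rmorphM invfM mulrACA xE yE.
- exists n => x _ /norm1_lift_principal[w Tw ->].
  by have [w0 _] := Tw; rewrite rhoM // (rhon _ Tw) rhoF ?mulr1 // /inF rmorph_nat.
Qed.

End Hilbert90.

Section Depth.
Variables (E : fieldType) (sigma : {rmorphism E -> E}) (v : E -> int) (R : realType).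
Hypothesis vM : forall x y, x != 0 -> y != 0 -> v (x * y) = v x + v y.
Hypothesis vU : forall x y, x != 0 -> y != 0 -> x + y != 0 ->
  Order.min (v x) (v y) <= v (x + y).
Implicit Types (chi : 'M[E]_2 -> R[i]) (r : nat).

Lemma is_char_T_units chi : is_char_T sigma v chi ->
  is_char_units v (fun a => chi (tmat sigma a)).
Proof. by case=> chi0 chiM chi_n; split=> // a b a0 b0; rewrite -chiM ?tmat_mul. Qed.

Lemma is_char_T_entry00 (psi : E -> R[i]) : is_char_units v psi ->
  is_char_T sigma v (fun M => psi (M 0 0)).
Proof.
case=> psi0 psiM [n psin]; split.
- by move=> a a0; rewrite tmat00 psi0.
- by move=> a b a0 b0; rewrite tmat_mul !tmat00 psiM.
- by exists n => a Ta; rewrite tmat00 psin.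
Qed.

Lemma inTn_neq0 n a : inTn v n a -> a != 0.
Proof. by case: n => [|n] []. Qed.

Lemma has_true_depth_trivS chi r : has_true_depth sigma v chi r -> trivS sigma v chi r.+1.
Proof.
case=> [[_ //]|[-> chiS0] a [Fa Ta]]; apply: chiS0; split=> //.
exact: inTn_le Ta.
Qed.

Lemma has_true_depth_eq_on_F chi chi' r :
  (forall f, inF sigma f -> f != 0 -> chi' (tmat sigma f) = chi (tmat sigma f)) ->
  has_true_depth sigma v chi r -> has_true_depth sigma v chi' r.
Proof.
move=> chi'F.
have trivS_eq n : trivS sigma v chi' n <-> trivS sigma v chi n.
  have eqS a : inSn sigma v n a -> chi' (tmat sigma a) = chi (tmat sigma a).
    by move=> [Fa /inTn_neq0]; apply: chi'F.
  by split=> chiS a Sa; [rewrite -(eqS a Sa) | rewrite (eqS a Sa)]; apply: chiS.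
by rewrite /has_true_depth !trivS_eq.
Qed.

Lemma has_min_depth_of_true_depth chi r : trivT sigma v chi r.+1 ->
  has_true_depth sigma v chi r -> has_min_depth sigma v chi r.
Proof.
move=> chiT Hr; split=> //; case: Hr => [[chiS _]|[r0 _]].
  by left; split=> // chiTr; apply: chiS => a [_ Ta]; apply: chiTr.
have [chiT0|chiT0] := pselect (trivT sigma v chi 0); first by right.
by left; rewrite r0 in chiT *.
Qed.

End Depth.

Theorem theorem3p3 (E : fieldType) (sigma : {rmorphism E -> E}) (v : E -> int)
    (R : realType)
    (Hsetup : unram_quad_local_setup sigma v)
    (r : nat) (chi : 'M[E]_2 -> R[i])
    (Hchi : is_char_T sigma v chi)
    (Htd : has_true_depth sigma v chi r) :
  exists (phi : E -> R[i]) (chi' : 'M[E]_2 -> R[i]),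
    [/\ is_char_E1 sigma v phi,
        is_char_T sigma v chi',
        has_min_depth sigma v chi' r &
        forall a : E, a != 0 ->
          chi (tmat sigma a) = phi (\det (tmat sigma a)) * chi' (tmat sigma a)].
Proof.
have [sigmaK [vM [vU [_ [_ [_ [[two0 v2] [eps [sq Hsq]]]]]]]]] := Hsetup.
have [_ [eps0 [_ [_ [sq2 [sigma_sq _]]]]]] := Hsq.
have sq0 : sq != 0 by apply: contraNneq eps0 => sq0; rewrite -sq2 sq0 expr0n.
have chiU := is_char_T_units Hchi.
have chiS := has_true_depth_trivS vM vU Htd.
have [psi [psiU psi_r psiF]] :=
  exists_char_extending_on_F vM vU chiU (fun f Ff Tf => chiS f (conj Ff Tf)).
pose rho a := chi (tmat sigma a) / psi a.
have rhoF f : inF sigma f -> f != 0 -> rho f = 1.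
  by move=> Ff f0; rewrite /rho psiF // divff //; case: chiU => chi0 _ _; apply: chi0.
have [phi phiE1 rhoE] :=
  exists_E1_factor vM sigmaK sq0 sigma_sq two0 v2 (is_char_units_div vM vU chiU psiU) rhoF.
exists phi, (fun M => psi (M 0 0)); split=> //.
- exact: is_char_T_entry00.
- apply: has_min_depth_of_true_depth; first by move=> a Ta; rewrite tmat00 psi_r.
  by apply: has_true_depth_eq_on_F Htd => f Ff f0; rewrite tmat00 psiF.
- move=> a a0; rewrite det_tmat -rhoE // tmat00 /rho divfK //.
  by case: psiU => psi0 _ _; apply: psi0.
Qed.
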